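(* Let $(G,\sigma)$ be a finite connected signed graph, $D$ the diameter and $\mathrm{vol}(G)=\sum_{x\in V}d_x$ the volume of $G$. Then for any $p>1$, the first (smallest) nonzero eigenvalue $\lambda_{p}^{\sigma}$ of the signed $p$-Laplacian $\Delta_p^{\sigma}$ satisfies \[ \lambda_{p}^{\sigma}\geq\frac{1}{(D+1)^{p-1}\mathrm{vol}(G)}. \]
   Context: $G=(V,E)$ is a finite simple connected graph with degrees $d_x$; $\sigma:E\to\{\pm1\}$, $\sigma_{xy}=\sigma(\{x,y\})$. For $p>1$, the signed $p$-Laplacian is $\Delta_{p}^{\sigma}f(x)=\frac{1}{d_{x}}\sum_{y\sim x}|\sigma_{xy}f(y)-f(x)|^{p-2}(\sigma_{xy}f(y)-f(x))$, with the convention $|t|^{p-2}t=0$ for $t=0$. A real $\lambda$ is an eigenvalue of $\Delta_p^\sigma$ if there is a nonzero $f:V\to\mathbb{R}$ with $-\Delta_{p}^{\sigma}f(x)=\lambda|f(x)|^{p-2}f(x)$ for all $x\in V$. *)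

From HB Require Import structures.
From mathcomp Require Import all_boot all_order all_algebra.
From mathcomp Require Import reals exp.
Set Implicit Arguments. Unset Strict Implicit. Unset Printing Implicit Defensive.
Import Order.TTheory GRing.Theory Num.Theory.
Local Open Scope ring_scope.

Section SignedPLaplacian.
Variables (T : finType) (e : rel T).

Definition simple_graph := symmetric e /\ irreflexive e.
Definition connected_graph := forall x y : T, connect e x y.

Definition deg (x : T) : nat := #|[set y | e x y]|.

Fixpoint walkn (n : nat) (x y : T) : bool :=
  if n is n'.+1 then [exists z, e x z && walkn n' z y] else x == y.

(* graph distance: least n such that a walk of length n from x to y exists
   (in a connected graph such an n is < #|T|) *)
Definition gdist (x y : T) : nat := find (fun n => walkn n x y) (iota 0 #|T|).

Definition diameter : nat := \max_(x : T) \max_(y : T) gdist x y.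

Variable R : realType.

Definition vol : R := \sum_(x : T) (deg x)%:R.

Definition signature (sigma : T -> T -> R) :=
  forall x y, e x y -> sigma x y = sigma y x /\ (sigma x y = 1 \/ sigma x y = -1).

Definition phi_p (p t : R) : R := if t == 0 then 0 else powR `|t| (p - 2) * t.

Definition signed_pLap (p : R) (sigma : T -> T -> R) (f : T -> R) (x : T) : R :=
  (deg x)%:R^-1 * \sum_(y | e x y) phi_p p (sigma x y * f y - f x).

Definition is_eigenvalue (p : R) (sigma : T -> T -> R) (lam : R) : Prop :=
  exists f : T -> R, (exists x, f x != 0) /\
    forall x, - signed_pLap p sigma f x = lam * phi_p p (f x).

End SignedPLaplacian.

From HB Require Import structures.
From mathcomp Require Import all_boot all_order all_algebra.
From mathcomp Require Import reals exp.
From mathcomp Require Import interval_inference classical_sets convex hoelder.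
From mathcomp Require Import ring lra.
Set Implicit Arguments. Unset Strict Implicit. Unset Printing Implicit Defensive.
Import Order.TTheory GRing.Theory Num.Theory.
Local Open Scope ring_scope.

(* Let f be an eigenfunction for lam <> 0 and x0 a maximum point of |f|. Testing the
   eigenvalue equation against f gives the energy identity
     sum_{x ~ y} |sigma_xy f(y) - f(x)|^p = 2 lam sum_x d_x |f(x)|^p <= 2 lam vol(G) |f(x0)|^p.
   If lam were below the bound, then for every edge zy with d(y, x0) <= d(z, x0), the edge
   together with a geodesic from y to x0 has at most D + 1 edges, so by the power mean
   inequality its total variation is < |f(x0)|; transporting the sign of f(x0) along it gives
   sigma_zy f(z) f(y) > 0. Hence sgn f switches sigma to the all-positive signature, and
   testing the equation against sgn f produces an antisymmetric double sum:
   lam sum_x d_x |f(x)|^(p-1) = 0, which is impossible. *)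

Section PowerMean.
Variables (R : realType) (p : R).
Hypothesis p_ge1 : 1 <= p.

Lemma powR_convex (t a b : R) : 0 <= t <= 1 -> 0 <= a -> 0 <= b ->
  (t * a + (1 - t) * b) `^ p <= t * a `^ p + (1 - t) * b `^ p.
Proof.
move=> /andP[t0 t1] a0 b0.
have := @convex_powR R p p_ge1 (Itv01 t0 t1) a b.
by rewrite !inE /= !in_itv /= !andbT !convRE; apply.
Qed.

Lemma powR_mean_le (X : Type) (s : seq X) (a : X -> R) :
  (forall x, 0 <= a x) -> (0 < size s)%N ->
  ((\sum_(x <- s) a x) / (size s)%:R) `^ p <= (\sum_(x <- s) a x `^ p) / (size s)%:R.
Proof.
move=> a0; elim: s => [//|x [|y s] IH] _; first by rewrite !big_seq1 !divr1.
move: IH; set l := y :: s; set n := size l => /(_ isT).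
set m := (\sum_(z <- l) a z) / n%:R => IH.
have n0 : 0 < n%:R :> R by rewrite ltr0n.
have n1 : n%:R + 1 != 0 :> R by rewrite gt_eqF // ltr_wpDl // ltW.
pose t := (n.+1%:R)^-1 : R.
have t01 : 0 <= t <= 1 by rewrite invr_ge0 ler0n invf_le1 ?ler1n ?ltr0n.
have mean_cons : (\sum_(z <- x :: l) a z) / n.+1%:R = t * a x + (1 - t) * m.
  by rewrite [in LHS]big_cons /t /m -addn1 natrD; field; rewrite n1 gt_eqF.
have powR_cons : t * a x `^ p + (1 - t) * ((\sum_(z <- l) a z `^ p) / n%:R) =
    (\sum_(z <- x :: l) a z `^ p) / n.+1%:R.
  by rewrite [in RHS]big_cons /t -addn1 natrD; field; rewrite n1 gt_eqF.
have m0 : 0 <= m by rewrite divr_ge0 ?sumr_ge0 ?ltW.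
rewrite mean_cons -powR_cons.
apply: le_trans (powR_convex t01 (a0 x) m0) _.
by rewrite lerD2l ler_wpM2l // subr_ge0; case/andP: t01.
Qed.

Lemma powR_sum_le (X : Type) (s : seq X) (a : X -> R) : (forall x, 0 <= a x) ->
  (\sum_(x <- s) a x) `^ p <= (size s)%:R `^ (p - 1) * \sum_(x <- s) a x `^ p.
Proof.
move=> a0; have p0 : 0 < p by apply: lt_le_trans p_ge1.
case: s => [|x s]; first by rewrite !big_nil powR0 ?gt_eqF // mulr0.
set l := x :: s; set n := (size l)%:R.
have n0 : 0 < n by rewrite ltr0n.
have n_neq0 : n != 0 by rewrite gt_eqF.
have := powR_mean_le a0 (isT : (0 < size l)%N); rewrite -/n.
set S := \sum_(x <- l) a x; set S' := \sum_(x <- l) a x `^ p => mean.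
have -> : S = n * (S / n) by rewrite mulrC divfK.
have -> : S' = n * (S' / n) by rewrite mulrC divfK.
rewrite powRM ?divr_ge0 ?sumr_ge0 ?(ltW n0) // mulrA mulrC -[n `^ p]mulr_powRB1 ?(ltW n0) //.
by rewrite mulrC [_ `^ _ * n]mulrC ler_wpM2l ?mulr_ge0 ?powR_ge0 ?(ltW n0).
Qed.
End PowerMean.

Section GraphDistance.
Variables (T : finType) (e : rel T).

Lemma walkn_path x (s : seq T) : path e x s -> walkn e (size s) x (last x s).
Proof.
elim: s x => [|y s IH] x //= /andP[exy ys].
by apply/existsP; exists y; rewrite exy IH.
Qed.

Lemma connect_walkn x y : connect e x y -> exists2 n, (n < #|T|)%N & walkn e n x y.
Proof.
move=> /connectP[s xs ->]; have [s' xs' uniq_s' _] := shortenP xs.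
exists (size s'); last exact: walkn_path.
by move/card_uniqP: uniq_s' => /= <-; apply: max_card.
Qed.

Lemma gdist_walkn x y : connect e x y -> walkn e (gdist e x y) x y.
Proof.
move=> /connect_walkn[n n_lt w].
have has_walk : has (fun n => walkn e n x y) (iota 0 #|T|).
  by apply/hasP; exists n; rewrite ?mem_iota.
have := nth_find 0 has_walk; rewrite nth_iota //.
by move: has_walk; rewrite has_find size_iota.
Qed.

Lemma gdist_min n x y : walkn e n x y -> (gdist e x y <= n)%N.
Proof.
move=> w; have [n_lt|n_ge] := ltnP n #|T|; last first.
  by apply: leq_trans (find_size _ _) _; rewrite size_iota.
by rewrite leqNgt; apply/negP => /(before_find 0); rewrite nth_iota // w.
Qed.

Lemma gdist_le_diameter x y : (gdist e x y <= diameter e)%N.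
Proof.
apply: leq_trans (@bigop.leq_bigmax _ (fun y => gdist e x y) y) _.
exact: (@bigop.leq_bigmax _ (fun x => \max_y gdist e x y) x).
Qed.

Hypothesis e_connected : connected_graph e.

Lemma gdist_neighbor x y k : gdist e x y = k.+1 -> exists2 z, e x z & gdist e z y = k.
Proof.
move=> dist_x; have := gdist_walkn (e_connected x y); rewrite dist_x.
move=> /existsP[z /andP[exz wz]]; exists z => //.
apply/eqP; rewrite eqn_leq gdist_min //= leqNgt; apply/negP => dist_z.
have : walkn e (gdist e z y).+1 x y.
  by apply/existsP; exists z; rewrite exz; apply: gdist_walkn.
by move/gdist_min; rewrite dist_x ltnS leqNgt dist_z.
Qed.

End GraphDistance.

Section EdgeSums.
Variables (R : realType) (T : finType) (e : rel T).
Hypothesis e_sym : symmetric e.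

Lemma sum_adj_swap (F : T -> T -> R) :
  \sum_x \sum_(y | e x y) F x y = \sum_x \sum_(y | e x y) F y x.
Proof.
under eq_bigr do rewrite big_mkcond /=.
rewrite exchange_big /=; apply: eq_bigr => x _.
by rewrite [RHS]big_mkcond; apply: eq_bigr => y _; rewrite e_sym.
Qed.

Lemma edge_seq_sum_le (w : T -> T -> R) (Q : seq (T * T)) :
  (forall x y, e x y -> w y x = w x y) -> (forall x y, 0 <= w x y) ->
  uniq Q -> (forall q, q \in Q -> e q.1 q.2) ->
  (forall q, q \in Q -> (q.2, q.1) \notin Q) ->
  2 * \sum_(q <- Q) w q.1 q.2 <= \sum_x \sum_(y | e x y) w x y.
Proof.
move=> w_sym w_ge0 uniq_Q Q_edges Q_antisym.
pose flip (q : T * T) := (q.2, q.1).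
have flipK : cancel flip flip by case.
pose L := Q ++ map flip Q.
have sum_L : \sum_(q <- L) w q.1 q.2 = 2 * \sum_(q <- Q) w q.1 q.2.
  rewrite big_cat big_map mulr2n mulrDl mul1r; congr (_ + _).
  by apply: eq_big_seq => q /Q_edges /w_sym.
have uniq_L : uniq L.
  rewrite cat_uniq (map_inj_uniq (can_inj flipK)) ?uniq_Q ?andbT //=.
  by apply/hasPn => _ /mapP[q Qq ->]; apply: Q_antisym.
have L_edges q : q \in L -> e q.1 q.2.
  by rewrite mem_cat => /orP[/Q_edges // | /mapP[q' /Q_edges ? ->]]; rewrite /= e_sym.
rewrite -sum_L (big_uniq _ uniq_L) /=.
under [X in _ <= X]eq_bigr do rewrite big_mkcond /=.
rewrite pair_big /= big_mkcond /=; apply: ler_sum => q _.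
by case: ifP => [/L_edges -> //|_]; case: ifP.
Qed.

End EdgeSums.

Section PhiP.
Variables (R : realType) (p : R).

Lemma phi_pN u : phi_p p (- u) = - phi_p p u.
Proof. by rewrite /phi_p oppr_eq0 normrN; case: eqP => _; rewrite ?oppr0 ?mulrN. Qed.

Lemma phi_p_mul_self u : 0 < p -> phi_p p u * u = `|u| `^ p.
Proof.
move=> p0; rewrite /phi_p; case: eqP => [->|/eqP u0].
  by rewrite mul0r normr0 powR0 // gt_eqF.
rewrite -mulrA -expr2 -real_normK ?num_real // -[X in _ * X]powR_mulrn ?normr_ge0 //.
by rewrite -powRD ?normr_eq0 ?u0 ?implybT // subrK.
Qed.

Lemma phi_p_sg u : phi_p p u * Num.sg u = `|u| `^ (p - 2) * `|u|.
Proof.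
rewrite /phi_p; case: eqP => [->|_]; first by rewrite normr0 !mul0r mulr0.
by rewrite -mulrA [u * _]mulrC -normrEsg.
Qed.

Lemma phi_p_sg_ge0 u : 0 <= phi_p p u * Num.sg u.
Proof. by rewrite phi_p_sg mulr_ge0 ?powR_ge0. Qed.

Lemma phi_p_sg_gt0 u : u != 0 -> 0 < phi_p p u * Num.sg u.
Proof. by move=> u0; rewrite phi_p_sg mulr_gt0 ?powR_gt0 // normr_gt0. Qed.

End PhiP.

Section SignedGraph.
Variables (R : realType) (T : finType) (e : rel T) (sigma : T -> T -> R) (p : R).
Hypotheses (e_sym : symmetric e) (sigma_signature : signature e sigma).
Variable f : T -> R.

Local Notation df x y := (sigma x y * f y - f x).

(* [sgn f] switches [sigma] to the all-positive signature, so [sigma] is balanced. *)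
Definition balancing := forall x y, e x y -> 0 < sigma x y * f x * f y.

Lemma sigma_pm x y : e x y -> sigma x y = 1 \/ sigma x y = -1.
Proof. by case/sigma_signature. Qed.

Lemma sigmaC x y : e x y -> sigma y x = sigma x y.
Proof. by case/sigma_signature => ->. Qed.

Lemma sign_df_le s x y : s = 1 \/ s = -1 -> e x y ->
  s * f y - `|df x y| <= s * sigma x y * f x.
Proof.
move=> s_pm exy; have := ler_norm (s * sigma x y * df x y).
rewrite !normrM; case: s_pm => ->; case: (sigma_pm exy) => ->;
  rewrite ?normrN normr1 !mul1r; lra.
Qed.

Lemma dfC x y : e x y -> df y x = - sigma x y * df x y.
Proof. by move=> exy; rewrite sigmaC //; case: (sigma_pm exy) => ->; ring. Qed.

Lemma normr_dfC x y : e x y -> `|df y x| = `|df x y|.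
Proof.
move=> exy; rewrite dfC // normrM normrN.
by case: (sigma_pm exy) => ->; rewrite ?normrN1 ?normr1 !mul1r.
Qed.

Lemma sum_phi_df_swap (g : T -> R) :
  \sum_x \sum_(y | e x y) phi_p p (df x y) * g x =
  - \sum_x \sum_(y | e x y) sigma x y * phi_p p (df x y) * g y.
Proof.
rewrite sum_adj_swap // -sumrN; apply: eq_bigr => x _.
rewrite -sumrN; apply: eq_bigr => y exy; rewrite dfC //.
by case: (sigma_pm exy) => ->; rewrite ?mulN1r ?opprK ?mul1r ?phi_pN; ring.
Qed.

Lemma balancing_sg x y : balancing -> e x y -> sigma x y * Num.sg (f y) = Num.sg (f x).
Proof.
move=> balanced exy; have pos := balanced x y exy.
have fx_neq0 : f x != 0 by apply: contraTneq pos => ->; rewrite mulr0 mul0r ltxx.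
have sg_fx2 : Num.sg (f x) * Num.sg (f x) = 1 by rewrite -expr2 sqr_sg fx_neq0.
move: pos => /gtr0_sg; rewrite !sgrM.
have -> : Num.sg (sigma x y) = sigma x y by case: (sigma_pm exy) => ->; rewrite ?sgrN1 ?sgr1.
move=> sg_prod; transitivity (sigma x y * Num.sg (f x) * Num.sg (f y) * Num.sg (f x)).
  by rewrite -[LHS]mulr1 -sg_fx2; ring.
by rewrite sg_prod mul1r.
Qed.

Lemma balancing_sum_phi_sg : balancing ->
  \sum_x \sum_(y | e x y) phi_p p (df x y) * Num.sg (f x) = 0.
Proof.
move=> balanced; have := sum_phi_df_swap (fun x => Num.sg (f x)).
rewrite (_ : \sum_x _ = \sum_x \sum_(y | e x y) phi_p p (df x y) * Num.sg (f x)).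
  by set S := \sum_x _; lra.
by apply: eq_bigr => x _; apply: eq_bigr => y exy; rewrite mulrAC balancing_sg // mulrC.
Qed.

Section Geodesic.
Hypotheses (e_irr : irreflexive e) (e_connected : connected_graph e) (p_gt1 : 1 < p).
Variable x0 : T.
Let M := `|f x0|.

(* [P] lists the edges of a geodesic from [y] to [x0], oriented towards [x0], and [s] is
   the sign of [f x0] transported back along it. *)
Lemma geodesic_bound k y : gdist e y x0 = k ->
  exists s, exists P : seq (T * T),
  [/\ s = 1 \/ s = -1, uniq P, size P = k,
    forall q, q \in P -> [/\ e q.1 q.2, gdist e q.1 x0 = (gdist e q.2 x0).+1
      & (gdist e q.1 x0 <= k)%N]
    & M - \sum_(q <- P) `|df q.1 q.2| <= s * f y].
Proof.
elim: k y => [|k IH] y dist_y.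
  have := gdist_walkn (e_connected y x0); rewrite dist_y => /eqP ->.
  rewrite /M; case: (lerP 0 (f x0)) => [f_ge0 | f_lt0].
    by exists 1, [::]; split; rewrite ?big_nil ?subr0 ?mul1r ?ger0_norm //; left.
  by exists (-1), [::]; split; rewrite ?big_nil ?subr0 ?mulN1r ?ltr0_norm //; right.
have [z eyz dist_z] := gdist_neighbor e_connected dist_y.
have [s [P [s_pm uniq_P size_P P_desc bound]]] := IH z dist_z.
exists (s * sigma y z), ((y, z) :: P); split.
- by case: s_pm => ->; case: (sigma_pm eyz) => ->;
    rewrite ?mul1r ?mulN1r ?opprK; [left | right | right | left].
- by rewrite /= uniq_P andbT; apply/negP => /P_desc[_ _]; rewrite /= dist_y ltnn.
- by rewrite /= size_P.
- move=> q; rewrite inE => /predU1P[-> | /P_desc[? ? ?]]; last by split=> //; apply: leqW.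
  by split; rewrite /= ?dist_y ?dist_z.
- rewrite big_cons /=; have := sign_df_le s_pm eyz; lra.
Qed.

Let K := ((diameter e).+1)%:R `^ (p - 1).
Let W := \sum_x \sum_(y | e x y) `|df x y| `^ p.
Hypothesis small_energy : K * (W / 2) < M `^ p.

Lemma edge_seq_sum_lt (Q : seq (T * T)) :
  uniq Q -> (forall q, q \in Q -> e q.1 q.2) ->
  (forall q, q \in Q -> (q.2, q.1) \notin Q) -> (size Q <= (diameter e).+1)%N ->
  \sum_(q <- Q) `|df q.1 q.2| < M.
Proof.
move=> uniq_Q Q_edges Q_antisym size_Q; have p0 : 0 < p by apply: lt_trans p_gt1.
have sum_powR_le : \sum_(q <- Q) `|df q.1 q.2| `^ p <= W / 2.
  rewrite ler_pdivlMr // mulrC; apply: edge_seq_sum_le => // x y exy.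
  by rewrite (normr_dfC exy).
have size_powR_le : (size Q)%:R `^ (p - 1) <= K.
  apply: ge0_ler_powR; rewrite ?nnegrE ?ler0n ?ler_nat //.
  by rewrite subr_ge0 ltW.
have sum_powR_lt : (\sum_(q <- Q) `|df q.1 q.2|) `^ p < M `^ p.
  apply: le_lt_trans (powR_sum_le (ltW p_gt1) _ (fun q => normr_ge0 _)) _.
  apply: le_lt_trans small_energy.
  by apply: ler_pM; rewrite ?powR_ge0 ?sumr_ge0 // => q _; apply: powR_ge0.
rewrite ltNge; apply: contraTN sum_powR_lt => M_le; rewrite -leNgt.
by apply: ge0_ler_powR; rewrite ?nnegrE ?sumr_ge0 ?(ltW p0) /M.
Qed.

Lemma edge_sign_pos z y : e z y -> (gdist e y x0 <= gdist e z x0)%N ->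
  0 < sigma z y * f z * f y.
Proof.
move=> ezy dist_le.
have [s [P [s_pm uniq_P size_P P_desc bound]]] := geodesic_bound (erefl (gdist e y x0)).
(* Distances to [x0] strictly decrease along [P] but not along [zy], so no edge of
   [(z, y) :: P] occurs twice or in both directions. *)
have zy_notin_P : (z, y) \notin P.
  by apply/negP => /P_desc[_ /= -> ]; rewrite ltnn.
have sum_lt : \sum_(q <- (z, y) :: P) `|df q.1 q.2| < M.
  apply: edge_seq_sum_lt.
  - by rewrite /= zy_notin_P.
  - by move=> q; rewrite inE => /predU1P[-> // | /P_desc[]].
  - move=> q; rewrite !inE => /predU1P[-> | /P_desc[_ desc_q _]] /=; apply/norP; split.
    + by apply: contraTneq ezy => -[-> _]; rewrite e_irr.
    + by apply/negP => /P_desc[_ /= desc_yz _]; move: dist_le; rewrite desc_yz ltnn.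
    + by apply/eqP => -[q2 q1]; move: dist_le; rewrite -q1 -q2 desc_q ltnn.
    + apply/negP => /P_desc[_ /= desc_q' _]; move/eqP: desc_q.
      by rewrite desc_q' ltn_eqF // leqnSn.
  - by rewrite /= size_P ltnS gdist_le_diameter.
have fy_pos : 0 < s * f y.
  by move: sum_lt bound (normr_ge0 (df z y)); rewrite big_cons /=; lra.
have fz_pos : 0 < s * sigma z y * f z.
  by move: sum_lt bound (sign_df_le s_pm ezy); rewrite big_cons /=; lra.
have -> : sigma z y * f z * f y = (s * f y) * (s * sigma z y * f z).
  by case: s_pm => ->; ring.
exact: mulr_gt0.
Qed.

Lemma small_energy_balancing : balancing.
Proof.
move=> x y exy; have [dist_le|dist_gt] := leqP (gdist e y x0) (gdist e x x0).
  exact: edge_sign_pos.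
by rewrite -sigmaC // mulrAC; apply: edge_sign_pos; rewrite 1?e_sym // ltnW.
Qed.

End Geodesic.

Section Eigenfunction.
Variable lam : R.
Hypothesis f_eigen : forall x, - signed_pLap e p sigma f x = lam * phi_p p (f x).

Lemma eigen_adj_sum x :
  \sum_(y | e x y) phi_p p (df x y) = - (lam * (deg e x)%:R * phi_p p (f x)).
Proof.
have [deg0|deg_neq0] := eqVneq (deg e x) 0%N.
  rewrite deg0 mulr0 mul0r oppr0 big_pred0 // => y.
  by move/eqP: deg0; rewrite cards_eq0 => /eqP/setP/(_ y); rewrite !inE.
have := f_eigen x; rewrite /signed_pLap mulrAC => <-.
by rewrite mulNr opprK mulrC mulrA mulfV ?mul1r // pnatr_eq0.
Qed.

Lemma eigen_weighted_sum (g : T -> R) :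
  \sum_x \sum_(y | e x y) phi_p p (df x y) * g x =
  - (lam * \sum_x (deg e x)%:R * (phi_p p (f x) * g x)).
Proof.
rewrite big_distrr -sumrN; apply: eq_bigr => x _.
by rewrite -big_distrl eigen_adj_sum /=; ring.
Qed.

Lemma eigen_energy : 0 < p ->
  \sum_x \sum_(y | e x y) `|df x y| `^ p = 2 * lam * \sum_x (deg e x)%:R * `|f x| `^ p.
Proof.
move=> p0.
have split_df : \sum_x \sum_(y | e x y) `|df x y| `^ p =
    \sum_x \sum_(y | e x y) sigma x y * phi_p p (df x y) * f y -
    \sum_x \sum_(y | e x y) phi_p p (df x y) * f x.
  rewrite -sumrB; apply: eq_bigr => x _; rewrite -sumrB; apply: eq_bigr => y _.
  by rewrite -phi_p_mul_self //; ring.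
rewrite split_df (_ : \sum_x _ = - \sum_x \sum_(y | e x y) phi_p p (df x y) * f x).
  rewrite eigen_weighted_sum; under eq_bigr do rewrite phi_p_mul_self //.
  ring.
by rewrite sum_phi_df_swap opprK.
Qed.

Lemma balancing_eigenvalue_eq0 x0 : balancing -> f x0 != 0 -> lam = 0.
Proof.
move=> balanced fx0_neq0; apply/eqP; apply: contraT => lam_neq0.
have weighted_eq0 : \sum_x (deg e x)%:R * (phi_p p (f x) * Num.sg (f x)) = 0.
  move: (eigen_weighted_sum (fun x => Num.sg (f x))).
  rewrite balancing_sum_phi_sg // => /esym/eqP.
  by rewrite oppr_eq0 mulf_eq0 (negbTE lam_neq0) => /eqP.
have /eqP : (deg e x0)%:R * (phi_p p (f x0) * Num.sg (f x0)) = 0 :> R.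
  by apply: (psumr_eq0P _ weighted_eq0) => // x _; rewrite mulr_ge0 ?phi_p_sg_ge0.
rewrite mulf_eq0 pnatr_eq0 [_ * _ == 0]gt_eqF ?phi_p_sg_gt0 // orbF => /eqP deg0.
have := f_eigen x0; rewrite /signed_pLap deg0 invr0 mul0r oppr0 => /esym/eqP.
rewrite mulf_eq0 (negbTE lam_neq0) /= => /eqP phi0.
by have := phi_p_sg_gt0 p fx0_neq0; rewrite phi0 mul0r ltxx.
Qed.

Lemma eigen_small_energy x0 : 1 < p -> (forall x, `|f x| <= `|f x0|) -> f x0 != 0 ->
  lam < 1 / (((diameter e).+1)%:R `^ (p - 1) * vol e R) ->
  ((diameter e).+1)%:R `^ (p - 1) * ((\sum_x \sum_(y | e x y) `|df x y| `^ p) / 2)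
    < `|f x0| `^ p.
Proof.
move=> p_gt1 x0_max fx0_neq0 lam_lt; have p0 : 0 < p by apply: lt_trans p_gt1.
set K := _ `^ (p - 1); set M := `|f x0|.
have K_gt0 : 0 < K by rewrite powR_gt0 // ltr0n.
have M_gt0 : 0 < M `^ p by rewrite powR_gt0 // normr_gt0.
rewrite eigen_energy //; set Sd := \sum_x _.
have -> : 2 * lam * Sd / 2 = lam * Sd by field.
have Sd_le : Sd <= vol e R * M `^ p.
  rewrite /vol big_distrl /=; apply: ler_sum => x _.
  by rewrite ler_wpM2l ?ler0n //; apply: ge0_ler_powR; rewrite ?nnegrE ?(ltW p0) /M.
have [lam_le0|lam_gt0] := lerP lam 0.
  apply: le_lt_trans M_gt0; rewrite mulr_ge0_le0 ?mulr_le0_ge0 ?(ltW K_gt0) //.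
  by apply: sumr_ge0 => x _; rewrite mulr_ge0 ?powR_ge0.
have Kvol_gt0 : 0 < K * vol e R.
  rewrite lt_neqAle mulr_ge0 ?(ltW K_gt0) ?sumr_ge0 // andbT.
  by apply: contraTneq lam_lt => <-; rewrite invr0 mulr0 -leNgt ltW.
have lam_Kvol : lam * (K * vol e R) < 1 by rewrite -ltr_pdivlMr // div1r.
apply: (@le_lt_trans _ _ (lam * (K * vol e R) * M `^ p)).
  by rewrite mulrCA -!mulrA ler_pM2l // ler_pM2l.
by rewrite -[X in _ < X]mul1r ltr_pM2r.
Qed.

End Eigenfunction.

End SignedGraph.

Theorem theorem4p2 (R : realType) (T : finType) (e : rel T)
  (sigma : T -> T -> R) (p : R) :
  simple_graph e -> connected_graph e -> signature e sigma -> 1 < p ->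
  forall lam : R, is_eigenvalue e p sigma lam -> lam != 0 ->
    1 / (powR ((diameter e).+1)%:R (p - 1) * vol e R) <= lam.
Proof.
move=> [e_sym e_irr] e_connected sigma_sig p_gt1 lam [f [[x1 fx1_neq0] f_eigen]] lam_neq0.
have [x0 _ x0_max] := @arg_maxP _ _ T x1 xpredT (fun x => `|f x|) isT.
have fx0_neq0 : f x0 != 0.
  by rewrite -normr_gt0 (lt_le_trans _ (x0_max x1 isT)) ?normr_gt0.
rewrite leNgt; apply/negP => lam_small.
have small := eigen_small_energy e_sym sigma_sig f_eigen p_gt1 (fun x => x0_max x isT)
  fx0_neq0 lam_small.
move/eqP: lam_neq0; apply; apply: (balancing_eigenvalue_eq0 e_sym sigma_sig f_eigen _ fx0_neq0).
exact: (small_energy_balancing e_sym sigma_sig e_irr e_connected p_gt1 small).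
Qed.
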